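(* Let $n\ge2$ and $\mathcal{W}=\mathcal{W}_{\lambda_-,\lambda_+}$ with $\lambda_-\le\lambda_+\in(-1,1)$. Consider a performance evaluation setting $\mathcal{S}_n=\{n,\mathcal{A},K,\mathcal{P},\mathcal{F},\mathcal{I},\mathcal{W}\}$ in which the algorithm $\mathcal{A}\in\mathcal{A}_d$, the performance measure $\mathcal{P}$, the initial conditions $\mathcal{I}$ and the interpolation constraints for $\mathcal{F}$ are linearly (or LMI) Gram-representable, and assume all the agents are equivalent in the PEP. Then: 1. The computation of $w(\mathcal{S}_n)$ can be formulated as an SDP with variables $f^A\in\mathbb{R}^q$, $G^A\in\mathbb{R}^{p\times p}$, $G^C\in\mathbb{R}^{p\times p}$, whose size is independent of $n$. 2. If, in addition, $\mathcal{P}$ is scale-invariant and $\mathcal{I}$ only contains single-agent constraints (each applied to every agent $i$) and scale-invariant constraints, then the resulting SDP and its optimal value $w(\mathcal{S}_n)$ are independent of $n$.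
   Context: Distributed optimization: $n$ agents with local functions $f_i:\mathbb{R}^d\to\mathbb{R}$ minimize $f(x)=\frac1n\sum_if_i(x)$. $\mathcal{A}_d$ is the class of algorithms built from (i) local gradient evaluations $g_i=\nabla f_i(x_i)$ at any local variable, (ii) consensus steps $\mathbf{y}=(W\otimes I_d)\mathbf{x}$ (i.e. $y_i=\sum_jw_{ij}x_j$) with $W\in\mathcal{W}$, (iii) linear combinations of an agent's local variables with coefficients known in advance. $\mathcal{W}_{\lambda_-,\lambda_+}$ is the set of symmetric $W\in\mathbb{R}^{n\times n}$ with $\lambda_1(W)=1$, eigenvector $\mathbf{1}/\sqrt n$, other eigenvalues in $[\lambda_-,\lambda_+]$. The setting $\mathcal{S}_n$ specifies $n$, the algorithm $\mathcal{A}$, the number of iterations $K$, the performance criterion $\mathcal{P}$, the class $\mathcal{F}$ of local functions, the initial conditions $\mathcal{I}$, and $\mathcal{W}$. Agent-dependent SDP PEP: each agent $i$ holds $p$ vector variables (iterates, consensus outputs, gradients at these points, and copies of points common to all agents such as the minimizer $x^*$ with $\nabla f_i(x^* )$), gathered as columns of $P_i\in\mathbb{R}^{d\times p}$ in a common order, and $q$ function values in $f_i\in\mathbb{R}^q$; variables $F=[f_1^T\dots f_n^T]$, $G=P^TP\succeq0$, $P=[P_1\dots P_n]$, $G_{ij}=P_i^TP_j$. An expression or constraint is linearly (resp. LMI) Gram-representable if it is given by finitely many linear (resp. linear matrix inequality) constraints or expressions in $(F,G)$. The PEP maximizes $\mathcal{P}(F,G)$ subject to $G\succeq0$, the algorithm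 constraints, interpolation constraints for $\mathcal{F}$ on each agent's triplets (point, gradient, value), the initial conditions, the optimality condition $\frac1n\sum_i\nabla f_i(x^* )=0$, and, for each set of consensus steps using a common matrix, with $X=[\mathbf{x}^1\dots\mathbf{x}^K]$, $Y=[\mathbf{y}^1\dots\mathbf{y}^K]\in\mathbb{R}^{nd\times K}$: $\bar X=\bar Y$, $(Y_\perp-\lambda_-X_\perp)^T(Y_\perp-\lambda_+X_\perp)\preceq0$, $X_\perp^TY_\perp=Y_\perp^TX_\perp$, where $\bar X$ replaces each agent's component by the agent average and $X_\perp=X-\bar X$. $w(\mathcal{S}_n)$ denotes the optimal value of this SDP. Agents $i,j$ are equivalent if for every feasible $(F,G)$, swapping the blocks of agents $i$ and $j$ gives a feasible solution with the same objective value. $f^A$, $G^A$, $G^C$ denote, respectively, the common agent block of function values, the common diagonal block, and the common off-diagonal block of a solution in which all $f_i$ are equal, all $G_{ii}$ are equal, and all $G_{ij}$ ($i\ne j$) are equal. A Gram-representable expression $h$ is scale-invariant if $h=\sum_jc_jh_j$ with coefficients $c_j$ independent of $n$ and each $h_j$ of one of the forms $\frac1n\sum_if_i(x_i)$, $\frac1n\sum_ix_i^Ty_i$, $\frac1{n^2}\sum_i\sum_jx_i^Ty_j$ for local variables $x_i,y_j$ of agents $i,j$ (common points being copied in each agent's variables); a constraint $h\le D$ is scale-invariant if $h$ is. An expression is single-agent if it is a linear combination, with coefficients independent of $n$, of terms involving only the local variables and local function of one agent $i$; a constraint $h\le D$ is single-agent if $h$ is. *)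

From HB Require Import structures.
From mathcomp Require Import all_boot all_order all_algebra.
From mathcomp Require Import boolp classical_sets reals constructive_ereal ereal.

Set Implicit Arguments.
Unset Strict Implicit.
Unset Printing Implicit Defensive.

Import Order.TTheory GRing.Theory Num.Theory.
Local Open Scope ring_scope.
Local Open Scope classical_set_scope.

Section PEP.
Variable R : realType.

Definition psd (m : nat) (A : 'M[R]_m) : Prop :=
  A^T = A /\ forall v : 'rV[R]_m, 0 <= (v *m A *m v^T) 0 0.

(* PEP variables for n agents with p vectors and q function values each:
   F i  = f_i in R^q (a row vector),
   G i j = G_ij = P_i^T P_j in R^{p x p} (block (i,j) of the Gram matrix). *)
Definition Fvar (n q : nat) := 'I_n -> 'rV[R]_q.
Definition Gvar (n p : nat) := 'I_n -> 'I_n -> 'M[R]_p.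

(* G = (G_ij) is a symmetric PSD (np x np) matrix, written out blockwise *)
Definition psd_blocks (n p : nat) (G : Gvar n p) : Prop :=
  (forall i j, G j i = (G i j)^T) /\
  forall v : 'I_n -> 'rV[R]_p,
    0 <= (\sum_i \sum_j (v i *m G i j *m (v j)^T)) 0 0.

Definition swap_idx (n : nat) (i j k : 'I_n) : 'I_n :=
  if k == i then j else if k == j then i else k.
Definition swapF n q (i j : 'I_n) (F : Fvar n q) : Fvar n q :=
  fun k => F (swap_idx i j k).
Definition swapG n p (i j : 'I_n) (G : Gvar n p) : Gvar n p :=
  fun k l => G (swap_idx i j k) (swap_idx i j l).

(* an LMI constraint affine in (F,G):
   C0 + sum_{i,a} F_i[a] CF_{i,a} + sum_{i,j,a,b} G_ij[a,b] CG_{i,j,a,b} >= 0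
   (linear scalar constraints are the case m = 1) *)
Record gen_lmi (n p q : nat) := GenLMI {
  gl_m : nat;
  gl_C0 : 'M[R]_gl_m;
  gl_CF : 'I_n -> 'I_q -> 'M[R]_gl_m;
  gl_CG : 'I_n -> 'I_n -> 'I_p -> 'I_p -> 'M[R]_gl_m }.
Arguments gl_C0 {n p q} L : rename.
Arguments gl_CF {n p q} L _ _ : rename.
Arguments gl_CG {n p q} L _ _ _ _ : rename.


Definition gen_lmi_eval n p q (L : gen_lmi n p q) (F : Fvar n q) (G : Gvar n p)
  : 'M[R]_(gl_m L) :=
  gl_C0 L + \sum_i \sum_a F i 0 a *: gl_CF L i a
          + \sum_i \sum_j \sum_a \sum_b G i j a b *: gl_CG L i j a b.

Record gen_obj (n p q : nat) := GenObj {
  go_c0 : R;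
  go_cF : 'I_n -> 'I_q -> R;
  go_cG : 'I_n -> 'I_n -> 'I_p -> 'I_p -> R }.

Definition gen_obj_eval n p q (o : gen_obj n p q) (F : Fvar n q) (G : Gvar n p) : R :=
  go_c0 o + \sum_i \sum_a go_cF o i a * F i 0 a
          + \sum_i \sum_j \sum_a \sum_b go_cG o i j a b * G i j a b.

(* A PEP: maximize the objective subject to G PSD and finitely many
   LMI-Gram-representable constraints (algorithm, interpolation, initial
   conditions, optimality condition, consensus constraints). *)
Record gen_pep (n p q : nat) := GenPEP {
  gp_obj : gen_obj n p q;
  gp_nL : nat;
  gp_L : 'I_gp_nL -> gen_lmi n p q }.
Arguments gp_L {n p q} P _ : rename.


Definition gen_feas n p q (P : gen_pep n p q) (F : Fvar n q) (G : Gvar n p) : Prop :=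
  psd_blocks G /\ forall k, psd (gen_lmi_eval (gp_L P k) F G).

Definition w_gen n p q (P : gen_pep n p q) : \bar R :=
  ereal_sup [set (gen_obj_eval (gp_obj P) FG.1 FG.2)%:E
            | FG in [set FG : Fvar n q * Gvar n p | gen_feas P FG.1 FG.2]].

Definition agents_equiv_gen n p q (P : gen_pep n p q) : Prop :=
  forall (F : Fvar n q) (G : Gvar n p) (i j : 'I_n),
    gen_feas P F G ->
    gen_feas P (swapF i j F) (swapG i j G) /\
    gen_obj_eval (gp_obj P) (swapF i j F) (swapG i j G)
      = gen_obj_eval (gp_obj P) F G.

(* The reduced SDP in the variables fA in R^q, GA, GC in R^{p x p}
   (obtained by restricting to f_i = fA, G_ii = GA, G_ij = GC (i <> j)). *)
Definition red_lmi_eval n p q (L : gen_lmi n p q)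
  (fA : 'rV[R]_q) (GA GC : 'M[R]_p) : 'M[R]_(gl_m L) :=
  gl_C0 L + \sum_a fA 0 a *: (\sum_i gl_CF L i a)
  + \sum_a \sum_b (GA a b *: (\sum_i gl_CG L i i a b)
                   + GC a b *: (\sum_i \sum_(j | j != i) gl_CG L i j a b)).

Definition red_obj_eval n p q (o : gen_obj n p q)
  (fA : 'rV[R]_q) (GA GC : 'M[R]_p) : R :=
  go_c0 o + \sum_a (\sum_i go_cF o i a) * fA 0 a
  + \sum_a \sum_b ((\sum_i go_cG o i i a b) * GA a b
                   + (\sum_i \sum_(j | j != i) go_cG o i j a b) * GC a b).

Definition red_feas n p q (P : gen_pep n p q)
  (fA : 'rV[R]_q) (GA GC : 'M[R]_p) : Prop :=
  GA^T = GA /\ GC^T = GC /\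
  psd (GA - GC) /\ psd (GA + (n.-1)%:R *: GC) /\
  forall k, psd (red_lmi_eval (gp_L P k) fA GA GC).

Definition w_gen_red n p q (P : gen_pep n p q) : \bar R :=
  ereal_sup [set (red_obj_eval (gp_obj P) X.1.1 X.1.2 X.2)%:E
            | X in [set X : 'rV[R]_q * 'M[R]_p * 'M[R]_p
                   | red_feas P X.1.1 X.1.2 X.2]].

Definition avgF n q (F : Fvar n q) (a : 'I_q) : R :=
  (n%:R)^-1 * \sum_i F i 0 a.
Definition gramA n p (G : Gvar n p) (a b : 'I_p) : R :=
  (n%:R)^-1 * \sum_i G i i a b.
Definition gramM n p (G : Gvar n p) (a b : 'I_p) : R :=
  (n%:R ^+ 2)^-1 * \sum_i \sum_j G i j a b.

(* scale-invariant expression: linear combination, with n-independent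
   coefficients, of the three forms above *)
Record si_expr (p q : nat) := SIExpr {
  si_cf : 'rV[R]_q;
  si_cA : 'M[R]_p;
  si_cM : 'M[R]_p }.

Definition si_eval n p q (h : si_expr p q) (F : Fvar n q) (G : Gvar n p) : R :=
  \sum_a si_cf h 0 a * avgF F a
  + \sum_a \sum_b (si_cA h a b * gramA G a b + si_cM h a b * gramM G a b).

(* single-agent LMI constraint (n-independent coefficients), applied to every
   agent i:  C0 + sum_a f_i[a] CF_a + sum_{a,b} G_ii[a,b] CG_{a,b} >= 0 *)
Record sa_lmi (p q : nat) := SALMI {
  sa_m : nat;
  sa_C0 : 'M[R]_sa_m;
  sa_CF : 'I_q -> 'M[R]_sa_m;
  sa_CG : 'I_p -> 'I_p -> 'M[R]_sa_m }.
Arguments sa_C0 {p q} c : rename.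
Arguments sa_CF {p q} c _ : rename.
Arguments sa_CG {p q} c _ _ : rename.


Definition sa_eval p q (c : sa_lmi p q) (f : 'rV[R]_q) (Gi : 'M[R]_p) : 'M[R]_(sa_m c) :=
  sa_C0 c + \sum_a f 0 a *: sa_CF c a + \sum_a \sum_b Gi a b *: sa_CG c a b.

(* a set of K consensus steps y^k = (W (x) I) x^k with a common W in W_{lm,lp};
   x^k (resp. y^k) is column cx k (resp. cy k) of every agent *)
Record cons_block (p : nat) := ConsBlock {
  cb_K : nat;
  cb_x : 'I_cb_K -> 'I_p;
  cb_y : 'I_cb_K -> 'I_p }.
Arguments cb_x {p} c _ : rename.
Arguments cb_y {p} c _ : rename.


(* (X_perp^T Y_perp)[k,l] for columns u (for k) and v (for l) *)
Definition perp_gram n p (G : Gvar n p) (u v : 'I_p) : R :=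
  \sum_i G i i u v - (n%:R)^-1 * \sum_i \sum_j G i j u v.

Definition cons_ok n p (lm lp : R) (c : cons_block p) (G : Gvar n p) : Prop :=
  let XY := \matrix_(k, l) perp_gram G (cb_x c k) (cb_y c l) in
  let YX := \matrix_(k, l) perp_gram G (cb_y c k) (cb_x c l) in
  let XX := \matrix_(k, l) perp_gram G (cb_x c k) (cb_x c l) in
  let YY := \matrix_(k, l) perp_gram G (cb_y c k) (cb_y c l) in
  (* Xbar = Ybar : || sum_i (x_i^k - y_i^k) ||^2 = 0 for every k *)
  (forall k, \sum_i \sum_j (G i j (cb_x c k) (cb_x c k) - G i j (cb_x c k) (cb_y c k)
                            - G i j (cb_y c k) (cb_x c k) + G i j (cb_y c k) (cb_y c k)) = 0)
  (* (Y_perp - lm X_perp)^T (Y_perp - lp X_perp) <= 0 *)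
  /\ psd (- (YY - lp *: YX - lm *: XY + (lm * lp) *: XX))
  /\ XY = YX.

Record pep_desc (p q : nat) := PEPDesc {
  pd_obj : si_expr p q;
  pd_nsa : nat;
  pd_sa : 'I_pd_nsa -> sa_lmi p q;          (* algorithm local steps, interpolation,
                                               single-agent initial conditions *)
  pd_nsi : nat;                             (* scale-invariant constraints h <= D *)
  pd_si : 'I_pd_nsi -> si_expr p q * R;
  pd_ncom : nat;                            (* columns holding common points (e.g. the minimizer) *)
  pd_com : 'I_pd_ncom -> 'I_p;
  pd_nopt : nat;                            (* columns g with (1/n) sum_i g_i = 0 *)
  pd_opt : 'I_pd_nopt -> 'I_p;
  pd_ncons : nat;
  pd_cons : 'I_pd_ncons -> cons_block p }.
Arguments pd_sa {p q} D _ : rename.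
Arguments pd_si {p q} D _ : rename.
Arguments pd_com {p q} D _ : rename.
Arguments pd_opt {p q} D _ : rename.
Arguments pd_cons {p q} D _ : rename.


Definition pd_feas (lm lp : R) n p q (D : pep_desc p q) (F : Fvar n q) (G : Gvar n p) : Prop :=
  psd_blocks G
  /\ (forall k i, psd (sa_eval (pd_sa D k) (F i) (G i i)))
  /\ (forall k, si_eval (pd_si D k).1 F G <= (pd_si D k).2)
  /\ (forall k i j, let a := pd_com D k in
        G i i a a - G i j a a - G j i a a + G j j a a = 0)
  /\ (forall k, let a := pd_opt D k in \sum_i \sum_j G i j a a = 0)
  /\ (forall k, cons_ok lm lp (pd_cons D k) G).

Definition w_pd (lm lp : R) n p q (D : pep_desc p q) : \bar R :=
  ereal_sup [set (si_eval (pd_obj D) FG.1 FG.2)%:E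
            | FG in [set FG : Fvar n q * Gvar n p | pd_feas lm lp D FG.1 FG.2]].

Definition agents_equiv_pd (lm lp : R) n p q (D : pep_desc p q) : Prop :=
  forall (F : Fvar n q) (G : Gvar n p) (i j : 'I_n),
    pd_feas lm lp D F G ->
    pd_feas lm lp D (swapF i j F) (swapG i j G) /\
    si_eval (pd_obj D) (swapF i j F) (swapG i j G) = si_eval (pd_obj D) F G.

(* The n-independent reduced SDP, in the variables fA, GA and
   GM = (1/n) GA + ((n-1)/n) GC (the average block of G). *)
Definition si_red p q (h : si_expr p q) (fA : 'rV[R]_q) (GA GM : 'M[R]_p) : R :=
  \sum_a si_cf h 0 a * fA 0 a
  + \sum_a \sum_b (si_cA h a b * GA a b + si_cM h a b * GM a b).

Definition cons_red_ok p (lm lp : R) (c : cons_block p) (GA GM : 'M[R]_p) : Prop :=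
  let Dl := GA - GM in
  let XY := \matrix_(k, l) Dl (cb_x c k) (cb_y c l) in
  let YX := \matrix_(k, l) Dl (cb_y c k) (cb_x c l) in
  let XX := \matrix_(k, l) Dl (cb_x c k) (cb_x c l) in
  let YY := \matrix_(k, l) Dl (cb_y c k) (cb_y c l) in
  (forall k, GM (cb_x c k) (cb_x c k) - GM (cb_x c k) (cb_y c k)
             - GM (cb_y c k) (cb_x c k) + GM (cb_y c k) (cb_y c k) = 0)
  /\ psd (- (YY - lp *: YX - lm *: XY + (lm * lp) *: XX))
  /\ XY = YX.

Definition pd_red_feas (lm lp : R) p q (D : pep_desc p q)
  (fA : 'rV[R]_q) (GA GM : 'M[R]_p) : Prop :=
  GA^T = GA /\ GM^T = GM /\ psd GM /\ psd (GA - GM)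
  /\ (forall k, psd (sa_eval (pd_sa D k) fA GA))
  /\ (forall k, si_red (pd_si D k).1 fA GA GM <= (pd_si D k).2)
  /\ (forall k, let a := pd_com D k in GA a a - GM a a = 0)
  /\ (forall k, let a := pd_opt D k in GM a a = 0)
  /\ (forall k, cons_red_ok lm lp (pd_cons D k) GA GM).

Definition w_pd_red (lm lp : R) p q (D : pep_desc p q) : \bar R :=
  ereal_sup [set (si_red (pd_obj D) X.1.1 X.1.2 X.2)%:E
            | X in [set X : 'rV[R]_q * 'M[R]_p * 'M[R]_p
                   | pd_red_feas lm lp D X.1.1 X.1.2 X.2]].

End PEP.

(* Symmetrization.  Equivalence of the agents means that the feasible set and
   the objective are invariant under transpositions of agents, hence under the
   whole symmetric group.  All constraints are affine LMIs or affine
   inequalities/equalities in (F, G), so averaging a feasible point over the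
   symmetric group yields a feasible point with the same value.  The average
   is permutation invariant: all f_i equal some f^A, all diagonal blocks equal
   G^A and all off-diagonal blocks equal G^C.  Such a block Gram matrix is PSD
   iff G^A - G^C and G^A + (n-1) G^C are; conversely every block point is a
   point of the original problem, which gives part 1.
   For part 2, the scale-invariant expressions and the consensus constraints of
   a block point only involve f^A, G^A and the mean block
   G^M = (G^A + (n-1) G^C) / n (the consensus matrices X_perp^T Y_perp are n
   times those built from G^A - G^M, and n > 0), and in these variables no
   constraint mentions n. *)

From HB Require Import structures.
From mathcomp Require Import all_boot all_order all_algebra.
From mathcomp Require Import boolp classical_sets reals constructive_ereal ereal.
From mathcomp Require Import fingroup perm ring lra.
Import Order.TTheory GRing.Theory Num.Theory.
Local Open Scope ring_scope.

Set Implicit Arguments.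
Unset Strict Implicit.
Unset Printing Implicit Defensive.

Section GroupAverage.
Variables (R : realType) (gT : finGroupType).
Implicit Types (h g : gT -> R).

Definition avg (V : lmodType R) (u : gT -> V) : V := (#|gT|%:R)^-1 *: \sum_s u s.
Definition avgR h : R := (#|gT|%:R)^-1 * \sum_s h s.

Lemma card_group_neq0 : (#|gT|%:R : R) != 0.
Proof. by rewrite pnatr_eq0 -lt0n; apply/card_gt0P; exists 1%g. Qed.

Lemma avg_cst (V : lmodType R) (x : V) : avg (fun=> x) = x.
Proof.
by rewrite /avg sumr_const -scaler_nat scalerA mulVf ?card_group_neq0 ?scale1r.
Qed.

Lemma avgR_eq_cst h c : (forall s, h s = c) -> avgR h = c.
Proof.
move=> hc; rewrite /avgR (eq_bigr _ (fun s _ => hc s)) sumr_const -[c *+ _]mulr_natl.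
by rewrite mulrA mulVf ?card_group_neq0 ?mul1r.
Qed.

Lemma avgD (V : lmodType R) (u v : gT -> V) :
  avg (fun s => u s + v s) = avg u + avg v.
Proof. by rewrite /avg big_split scalerDr. Qed.

Lemma avgRD h g : avgR (fun s => h s + g s) = avgR h + avgR g.
Proof. by rewrite /avgR big_split mulrDr. Qed.

Lemma avgB (V : lmodType R) (u v : gT -> V) :
  avg (fun s => u s - v s) = avg u - avg v.
Proof. by rewrite /avg sumrB scalerBr. Qed.

Lemma avgRB h g : avgR (fun s => h s - g s) = avgR h - avgR g.
Proof. by rewrite /avgR sumrB mulrBr. Qed.

Lemma avgN (V : lmodType R) (u : gT -> V) : avg (fun s => - u s) = - avg u.
Proof. by rewrite /avg sumrN scalerN. Qed.

Lemma avgZ (V : lmodType R) (a : R) (u : gT -> V) :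
  avg (fun s => a *: u s) = a *: avg u.
Proof. by rewrite /avg -scaler_sumr !scalerA mulrC. Qed.

Lemma avgRMl a h : avgR (fun s => a * h s) = a * avgR h.
Proof. by rewrite /avgR -mulr_sumr mulrCA. Qed.

Lemma avg_sum (V : lmodType R) (I : Type) (r : seq I) (P : pred I)
    (u : I -> gT -> V) :
  avg (fun s => \sum_(i <- r | P i) u i s) = \sum_(i <- r | P i) avg (u i).
Proof. by rewrite /avg exchange_big scaler_sumr. Qed.

Lemma avgR_sum (I : Type) (r : seq I) (P : pred I) (h : I -> gT -> R) :
  avgR (fun s => \sum_(i <- r | P i) h i s) = \sum_(i <- r | P i) avgR (h i).
Proof. by rewrite /avgR exchange_big mulr_sumr. Qed.

Lemma avgR_scale (V : lmodType R) h (x : V) :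
  avgR h *: x = avg (fun s => h s *: x).
Proof. by rewrite /avg /avgR -scaler_suml scalerA. Qed.

Lemma avgR_le h g : (forall s, h s <= g s) -> avgR h <= avgR g.
Proof.
by move=> hg; rewrite ler_wpM2l ?invr_ge0 ?ler0n //; apply: ler_sum => s _.
Qed.

Lemma avgR_ge0 h : (forall s, 0 <= h s) -> 0 <= avgR h.
Proof. by move=> h_ge0; rewrite -(@avgR_eq_cst (fun=> 0) 0) //; apply: avgR_le. Qed.

Lemma avgR_le_cst h c : (forall s, h s <= c) -> avgR h <= c.
Proof. by move=> h_le; rewrite -(@avgR_eq_cst (fun=> c) c) //; apply: avgR_le. Qed.

Lemma avg_mxE m1 m2 (A : gT -> 'M[R]_(m1, m2)) i j :
  avg A i j = avgR (fun s => A s i j).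
Proof. by rewrite /avg /avgR mxE summxE. Qed.

Lemma avg_tr m1 m2 (A : gT -> 'M[R]_(m1, m2)) :
  (avg A)^T = avg (fun s => (A s)^T).
Proof.
by apply/matrixP => i j; rewrite mxE !avg_mxE; congr avgR; apply/funext => s; rewrite mxE.
Qed.

End GroupAverage.

Section BilinearForm.
Variable R : realType.

Definition bform m (M : 'M[R]_m) (u v : 'rV[R]_m) : R := (u *m M *m v^T) 0 0.

Variable m : nat.
Implicit Types (M N : 'M[R]_m) (u v : 'rV[R]_m).

Lemma bformDm M N u v : bform (M + N) u v = bform M u v + bform N u v.
Proof. by rewrite /bform mulmxDr mulmxDl mxE. Qed.

Lemma bformZm c M u v : bform (c *: M) u v = c * bform M u v.
Proof. by rewrite /bform -scalemxAr -scalemxAl mxE. Qed.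

Lemma bformBm M N u v : bform (M - N) u v = bform M u v - bform N u v.
Proof. by rewrite bformDm -scaleN1r bformZm mulN1r. Qed.

Lemma bform_summ I (r : seq I) (P : pred I) (M : I -> 'M[R]_m) u v :
  bform (\sum_(i <- r | P i) M i) u v = \sum_(i <- r | P i) bform (M i) u v.
Proof. by rewrite /bform mulmx_sumr mulmx_suml summxE. Qed.

Lemma bformDl M u1 u2 v : bform M (u1 + u2) v = bform M u1 v + bform M u2 v.
Proof. by rewrite /bform !mulmxDl mxE. Qed.

Lemma bformZl M c u v : bform M (c *: u) v = c * bform M u v.
Proof. by rewrite /bform -!scalemxAl mxE. Qed.

Lemma bformNl M u v : bform M (- u) v = - bform M u v.
Proof. by rewrite -scaleN1r bformZl mulN1r. Qed.

Lemma bform_suml I (r : seq I) (P : pred I) M (u : I -> 'rV[R]_m) v :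
  bform M (\sum_(i <- r | P i) u i) v = \sum_(i <- r | P i) bform M (u i) v.
Proof. by rewrite /bform !mulmx_suml summxE. Qed.

Lemma bformDr M u v1 v2 : bform M u (v1 + v2) = bform M u v1 + bform M u v2.
Proof. by rewrite /bform linearD /= mulmxDr mxE. Qed.

Lemma bformZr M c u v : bform M u (c *: v) = c * bform M u v.
Proof. by rewrite /bform linearZ /= -scalemxAr mxE. Qed.

Lemma bformNr M u v : bform M u (- v) = - bform M u v.
Proof. by rewrite -scaleN1r bformZr mulN1r. Qed.

Lemma bform_sumr I (r : seq I) (P : pred I) M u (v : I -> 'rV[R]_m) :
  bform M u (\sum_(i <- r | P i) v i) = \sum_(i <- r | P i) bform M u (v i).
Proof. by rewrite /bform raddf_sum mulmx_sumr summxE. Qed.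

Lemma bform0l M v : bform M 0 v = 0.
Proof. by rewrite /bform !mul0mx mxE. Qed.

Lemma bform0r M u : bform M u 0 = 0.
Proof. by rewrite /bform trmx0 mulmx0 mxE. Qed.

Lemma psdZ_gt0 c M : 0 < c -> psd (c *: M) <-> psd M.
Proof.
move=> c_gt0; rewrite /psd linearZ /=; split=> -[symM posM]; split.
- exact: (scalerI (lt0r_neq0 c_gt0)).
- move=> v; have := posM v.
  by rewrite -/(bform _ _ _) bformZm pmulr_rge0.
- by rewrite symM.
- by move=> v; rewrite -/(bform _ _ _) bformZm; apply: mulr_ge0; [exact: ltW | exact: posM].
Qed.

Lemma bform_avg (gT : finGroupType) (A : gT -> 'M[R]_m) u v :
  bform (avg A) u v = avgR (fun s => bform (A s) u v).
Proof. by rewrite bformZm bform_summ. Qed.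

Lemma psd_avg (gT : finGroupType) (A : gT -> 'M[R]_m) :
  (forall s, psd (A s)) -> psd (avg A).
Proof.
move=> psdA; split.
  by rewrite avg_tr; congr avg; apply/funext => s; case: (psdA s).
move=> v; rewrite -/(bform _ _ _) bform_avg.
by apply: avgR_ge0 => s; case: (psdA s) => _; apply.
Qed.

End BilinearForm.

Section BlockGram.
Variables (R : realType) (n p : nat).
Local Notation nR := (n%:R : R).
Implicit Types (GA GC : 'M[R]_p) (v w : 'I_n -> 'rV[R]_p).

Definition blkG GA GC : Gvar R n p := fun i j => if i == j then GA else GC.

Lemma sum_blkG (V : nmodType) GA GC (E : 'I_n -> 'I_n -> 'M[R]_p -> V) :
  \sum_i \sum_j E i j (blkG GA GC i j)
  = \sum_i E i i GA + \sum_i \sum_(j | j != i) E i j GC.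
Proof.
rewrite -big_split /=; apply: eq_bigr => i _; rewrite (bigD1 i) //= /blkG eqxx.
by congr (_ + _); apply: eq_bigr => j; rewrite eq_sym => /negbTE ->.
Qed.

Lemma sum_blkG_cst (T : 'M[R]_p -> R) GA GC :
  \sum_i \sum_j T (blkG GA GC i j) = nR * T GA + nR * (nR - 1) * T GC.
Proof.
rewrite (sum_blkG GA GC (fun _ _ => T)) sumr_const card_ord.
under eq_bigr => i _ do rewrite sumr_const cardC1 card_ord.
rewrite sumr_const card_ord -[T GA *+ n]mulr_natl -[T GC *+ _]mulr_natl.
rewrite -[(_ * T GC) *+ n]mulr_natl mulrA.
have [-> | n_gt0] := posnP n; first by rewrite !mul0r.
by rewrite -subn1 natrB.
Qed.

Lemma bform_blkG GA GC v :
  (\sum_i \sum_j (v i *m blkG GA GC i j *m (v j)^T)) 0 0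
  = \sum_i bform (GA - GC) (v i) (v i) + bform GC (\sum_i v i) (\sum_i v i).
Proof.
rewrite summxE; under eq_bigr => i _ do rewrite summxE.
rewrite (sum_blkG GA GC (fun i j M => bform M (v i) (v j))) bform_suml.
under [X in _ = _ + X]eq_bigr => i _ do rewrite bform_sumr (bigD1 i) //=.
rewrite !big_split /= addrA; congr (_ + _).
by rewrite -big_split; apply: eq_bigr => i _; rewrite bformBm; apply/esym/subrK.
Qed.

Lemma sum_bform_center (D : 'M[R]_p) w (m : 'rV[R]_p) : \sum_i w i = 0 ->
  \sum_i bform D (w i + m) (w i + m) = \sum_i bform D (w i) (w i) + nR * bform D m m.
Proof.
move=> w_sum0.
have cross : \sum_i (bform D (w i) m + bform D m (w i)) = 0.
  by rewrite big_split /= -bform_suml -bform_sumr w_sum0 bform0l bform0r addr0.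
rewrite (eq_bigr (fun i => bform D (w i) (w i)
                       + (bform D (w i) m + bform D m (w i)) + bform D m m)).
  by rewrite big_split /= big_split /= cross addr0 sumr_const card_ord mulr_natl.
by move=> i _; rewrite bformDl !bformDr; ring.
Qed.

Hypothesis n_gt1 : (1 < n)%N.

Lemma predn_natr : (n.-1)%:R = nR - 1.
Proof. by rewrite -subn1 natrB // ltnW. Qed.

Lemma bform_blkG_mean GA GC u :
  nR * bform (GA - GC) u u + bform GC (nR *: u) (nR *: u)
  = nR * bform (GA + (n.-1)%:R *: GC) u u.
Proof. by rewrite bformZl bformZr bformBm bformDm bformZm predn_natr; ring. Qed.

Lemma psd_of_psd_blocks_blkG GA GC : psd_blocks (blkG GA GC) ->
  [/\ GA^T = GA, GC^T = GC, psd (GA - GC) & psd (GA + (n.-1)%:R *: GC)].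
Proof.
pose i0 : 'I_n := Ordinal (ltnW n_gt1); pose i1 : 'I_n := Ordinal n_gt1.
have neq_i10 : i1 != i0 by [].
move=> [symG posG].
have symA : GA^T = GA by have := symG i0 i0; rewrite /blkG eqxx.
have symC : GC^T = GC by have := symG i0 i1; rewrite /blkG.
split=> //.
- split=> [|u]; first by rewrite linearB /= symA symC.
  pose v i := if i == i0 then u else if i == i1 then - u else 0.
  have v_out i : i != i0 -> i != i1 -> v i = 0 by rewrite /v => /negbTE -> /negbTE ->.
  have v_sum0 : \sum_i v i = 0.
    rewrite (bigD1 i0) // (bigD1 i1) // big1 => [|i /andP []/v_out//].
    by rewrite /= /v eqxx (negbTE neq_i10) eqxx addr0 subrr.
  have := posG v; rewrite bform_blkG v_sum0 bform0l addr0 (bigD1 i0) // (bigD1 i1) //=.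
  rewrite big1 => [|i /andP [? ?]]; last by rewrite v_out ?bform0l.
  rewrite /v eqxx (negbTE neq_i10) eqxx bformNl bformNr opprK addr0.
  by rewrite -/(bform _ _ _); lra.
- split=> [|u]; first by rewrite linearD linearZ /= symA symC.
  have := posG (fun=> u); rewrite bform_blkG !sumr_const card_ord -scaler_nat.
  by rewrite -[_ *+ n]mulr_natl bform_blkG_mean pmulr_rge0 // ltr0n ltnW.
Qed.

Lemma psd_blocks_blkG_of_psd GA GC : GA^T = GA -> GC^T = GC ->
  psd (GA - GC) -> psd (GA + (n.-1)%:R *: GC) -> psd_blocks (blkG GA GC).
Proof.
move=> symA symC [_ posD] [_ posS].
have nR_gt0 : 0 < nR by rewrite ltr0n ltnW.
split=> [i j | v]; first by rewrite /blkG eq_sym; case: (i == j).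
have [m sum_v] : exists m, \sum_i v i = nR *: m.
  by exists (nR^-1 *: \sum_i v i); rewrite scalerA mulfV ?lt0r_neq0 ?scale1r.
have sum_w : \sum_i (v i - m) = 0.
  by rewrite sumrB sumr_const card_ord -scaler_nat sum_v subrr.
rewrite bform_blkG sum_v.
under eq_bigr => i _ do rewrite -[v i](subrK m).
rewrite sum_bform_center // -addrA bform_blkG_mean.
apply: addr_ge0; first by apply: sumr_ge0 => i _; apply: posD.
by rewrite pmulr_rge0 //; apply: posS.
Qed.

Lemma psd_blocks_blkG GA GC :
  psd_blocks (blkG GA GC) <->
  [/\ GA^T = GA, GC^T = GC, psd (GA - GC) & psd (GA + (n.-1)%:R *: GC)].
Proof.
split=> [|[]]; first exact: psd_of_psd_blocks_blkG.
exact: psd_blocks_blkG_of_psd.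
Qed.

End BlockGram.

Section Symmetrization.
Variables (R : realType) (n p q : nat).
Implicit Types (F : Fvar R n q) (G : Gvar R n p) (s t : {perm 'I_n}).

Definition actF s F : Fvar R n q := fun i => F (s i).
Definition actG s G : Gvar R n p := fun i j => G (s i) (s j).

Definition symF F : Fvar R n q := fun i => avg (fun s => actF s F i).
Definition symG G : Gvar R n p := fun i j => avg (fun s => actG s G i j).

Lemma swap_idxE (i j k : 'I_n) : swap_idx i j k = tperm i j k.
Proof.
rewrite /swap_idx; case: tpermP => [->|->|/eqP/negbTE -> /eqP/negbTE ->] //.
- by rewrite eqxx.
- by case: eqP => [->|_]; rewrite ?eqxx.
Qed.

Lemma swapFE i j F : swapF i j F = actF (tperm i j) F.
Proof. by apply/funext => k; rewrite /swapF /actF swap_idxE. Qed.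

Lemma swapGE i j G : swapG i j G = actG (tperm i j) G.
Proof. by apply/funext => k; apply/funext => l; rewrite /swapG /actG !swap_idxE. Qed.

Lemma act_closed_of_swap_closed (Phi : Fvar R n q -> Gvar R n p -> Prop) :
    (forall i j F G, Phi F G -> Phi (swapF i j F) (swapG i j G)) ->
  forall s F G, Phi F G -> Phi (actF s F) (actG s G).
Proof.
move=> Phi_swap s F G PhiFG; have [ts -> _] := prod_tpermP s.
elim: ts => [|t ts IHts] /=.
  have -> : actF (\prod_(t <- [::]) tperm t.1 t.2) F = F.
    by apply/funext => k; rewrite big_nil /actF perm1.
  have -> : actG (\prod_(t <- [::]) tperm t.1 t.2) G = G.
    by do !apply/funext => ?; rewrite big_nil /actG !perm1.
  exact: PhiFG.
have -> : actF (\prod_(t0 <- t :: ts) tperm t0.1 t0.2) F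
        = swapF t.1 t.2 (actF (\prod_(t0 <- ts) tperm t0.1 t0.2) F).
  by apply/funext => k; rewrite swapFE big_cons /actF permM.
have -> : actG (\prod_(t0 <- t :: ts) tperm t0.1 t0.2) G
        = swapG t.1 t.2 (actG (\prod_(t0 <- ts) tperm t0.1 t0.2) G).
  by do !apply/funext => ?; rewrite swapGE big_cons /actG !permM.
exact: Phi_swap.
Qed.

Lemma act_invariant_of_swap_invariant (feas : Fvar R n q -> Gvar R n p -> Prop)
    (obj : Fvar R n q -> Gvar R n p -> R) :
    (forall F G i j, feas F G ->
       feas (swapF i j F) (swapG i j G) /\ obj (swapF i j F) (swapG i j G) = obj F G) ->
  forall s F G, feas F G -> feas (actF s F) (actG s G) /\ obj (actF s F) (actG s G) = obj F G.
Proof.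
move=> swap_inv s F G feasFG.
apply: (act_closed_of_swap_closed (Phi := fun F' G' => feas F' G' /\ obj F' G' = obj F G)) => //.
by move=> i j F' G' [/(swap_inv _ _ i j) [feas' ->]].
Qed.

Lemma symG_relabel G t i j : symG G (t i) (t j) = symG G i j.
Proof.
rewrite /symG /avg [in RHS](reindex_inj (mulgI t)) /=.
by congr (_ *: _); apply: eq_bigr => s _; rewrite /actG !permM.
Qed.

Lemma symG_eq G i j i' j' : (i == j) = (i' == j') -> symG G i j = symG G i' j'.
Proof.
move=> eq_ij; have [ij|neq_ij] := eqVneq i j.
  move: eq_ij; rewrite ij eqxx => /esym/eqP <-.
  by rewrite -(symG_relabel G (tperm j i')) tpermL.
have neq_ij' : i' != j' by rewrite -eq_ij.
(* [t] first sends i to i', then moves the image of j to j' while fixing i'. *)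
pose t := (tperm i i' * tperm (tperm i i' j) j')%g.
have tj' : t j = j' by rewrite /t permM tpermL.
have ti' : t i = i'.
  rewrite /t permM tpermL tpermD //; last by rewrite eq_sym.
  by rewrite -[X in _ != X](tpermL i i') (inj_eq perm_inj) eq_sym.
by rewrite -(symG_relabel G t) ti' tj'.
Qed.

Lemma psd_blocks_sym G :
  (forall s, psd_blocks (actG s G)) -> psd_blocks (symG G).
Proof.
move=> psdG; split.
  by move=> i j; rewrite avg_tr; congr avg; apply/funext => s; case: (psdG s).
move=> v; rewrite summxE.
under eq_bigr => i _ do rewrite summxE.
under eq_bigr => i _ do under eq_bigr => j _ do rewrite -/(bform _ _ _) bform_avg.
under eq_bigr => i _ do rewrite -avgR_sum.
rewrite -avgR_sum; apply: avgR_ge0 => s.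
have [_ /(_ v)] := psdG s; rewrite summxE.
by under eq_bigr => i _ do rewrite summxE.
Qed.

Lemma symF_cst F i : symF F = fun=> symF F i.
Proof.
apply/funext => j; rewrite /symF /avg (reindex_inj (mulgI (tperm j i))) /=.
by congr (_ *: _); apply: eq_bigr => s _; rewrite /actF permM tpermL.
Qed.

Lemma symG_blk G i j : i != j -> symG G = blkG (symG G i i) (symG G i j).
Proof.
move=> neq_ij; apply/funext => k; apply/funext => l.
rewrite /blkG; case: eqP => [<-|/eqP neq_kl]; apply: symG_eq.
  by rewrite !eqxx.
by rewrite (negbTE neq_kl) (negbTE neq_ij).
Qed.

End Symmetrization.

Lemma exchange_big3 (V : nmodType) (I J K : Type) (rI : seq I) (rJ : seq J)
    (rK : seq K) (P : pred I) (f : I -> J -> K -> V) :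
  \sum_(i <- rI | P i) \sum_(j <- rJ) \sum_(k <- rK) f i j k
  = \sum_(j <- rJ) \sum_(k <- rK) \sum_(i <- rI | P i) f i j k.
Proof. by rewrite exchange_big; apply: eq_bigr => j _; apply: exchange_big. Qed.

Section GeneralPEP.
Variables (R : realType) (n p q : nat).
Implicit Types (F : Fvar R n q) (G : Gvar R n p).

Lemma gen_lmi_eval_sym (L : gen_lmi R n p q) F G :
  gen_lmi_eval L (symF F) (symG G) = avg (fun s => gen_lmi_eval L (actF s F) (actG s G)).
Proof.
rewrite /gen_lmi_eval !avgD avg_cst !avg_sum; congr (_ + _ + _).
  by apply: eq_bigr => i _; rewrite avg_sum; apply: eq_bigr => a _; rewrite avg_mxE avgR_scale.
apply: eq_bigr => i _; rewrite avg_sum; apply: eq_bigr => j _; rewrite avg_sum.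
by apply: eq_bigr => a _; rewrite avg_sum; apply: eq_bigr => b _; rewrite avg_mxE avgR_scale.
Qed.

Lemma gen_obj_eval_sym (o : gen_obj R n p q) F G :
  gen_obj_eval o (symF F) (symG G) = avgR (fun s => gen_obj_eval o (actF s F) (actG s G)).
Proof.
rewrite /gen_obj_eval !avgRD (avgR_eq_cst (c := go_c0 o)) // !avgR_sum; congr (_ + _ + _).
  by apply: eq_bigr => i _; rewrite avgR_sum; apply: eq_bigr => a _; rewrite avg_mxE avgRMl.
apply: eq_bigr => i _; rewrite avgR_sum; apply: eq_bigr => j _; rewrite avgR_sum.
by apply: eq_bigr => a _; rewrite avgR_sum; apply: eq_bigr => b _; rewrite avg_mxE avgRMl.
Qed.

Lemma gen_feas_sym (P : gen_pep R n p q) F G :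
  agents_equiv_gen P -> gen_feas P F G ->
  gen_feas P (symF F) (symG G) /\
  gen_obj_eval (gp_obj P) (symF F) (symG G) = gen_obj_eval (gp_obj P) F G.
Proof.
move=> equivP feasFG.
have orbit s := act_invariant_of_swap_invariant equivP s feasFG.
split; first split.
- by apply: psd_blocks_sym => s; have [[]] := orbit s.
- by move=> k; rewrite gen_lmi_eval_sym; apply: psd_avg => s; have [[_]] := orbit s.
- by rewrite gen_obj_eval_sym; apply: avgR_eq_cst => s; have [] := orbit s.
Qed.

Lemma gen_lmi_eval_blk (L : gen_lmi R n p q) fA GA GC :
  gen_lmi_eval L (fun=> fA) (blkG GA GC) = red_lmi_eval L fA GA GC.
Proof.
rewrite /gen_lmi_eval /red_lmi_eval exchange_big /=; congr (_ + _ + _).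
  by apply: eq_bigr => a _; rewrite scaler_sumr.
rewrite (sum_blkG GA GC (fun i j M => \sum_a \sum_b M a b *: gl_CG L i j a b)).
rewrite exchange_big3; under [X in _ + X = _]eq_bigr => i _ do rewrite exchange_big3.
rewrite [X in _ + X = _]exchange_big3 -big_split; apply: eq_bigr => a _; rewrite -big_split.
apply: eq_bigr => b _; rewrite !scaler_sumr; congr (_ + _).
by apply: eq_bigr => i _; rewrite scaler_sumr.
Qed.

Lemma gen_obj_eval_blk (o : gen_obj R n p q) fA GA GC :
  gen_obj_eval o (fun=> fA) (blkG GA GC) = red_obj_eval o fA GA GC.
Proof.
rewrite /gen_obj_eval /red_obj_eval exchange_big /=; congr (_ + _ + _).
  by apply: eq_bigr => a _; rewrite mulr_suml.
rewrite (sum_blkG GA GC (fun i j M => \sum_a \sum_b go_cG o i j a b * M a b)).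
rewrite exchange_big3; under [X in _ + X = _]eq_bigr => i _ do rewrite exchange_big3.
rewrite [X in _ + X = _]exchange_big3 -big_split; apply: eq_bigr => a _; rewrite -big_split.
apply: eq_bigr => b _; rewrite !mulr_suml; congr (_ + _).
by apply: eq_bigr => i _; rewrite mulr_suml.
Qed.

Hypothesis n_gt1 : (1 < n)%N.

Lemma gen_feas_blk (P : gen_pep R n p q) fA GA GC :
  gen_feas P (fun=> fA) (blkG GA GC) <-> red_feas P fA GA GC.
Proof.
rewrite /gen_feas /red_feas psd_blocks_blkG //.
have lmiE (k : 'I_(gp_nL P)) : gen_lmi_eval (gp_L k) (fun=> fA) (blkG GA GC)
                               = red_lmi_eval (gp_L k) fA GA GC.
  exact: gen_lmi_eval_blk.
split=> [[[symA symC psdD psdS] psdL] | [symA [symC [psdD [psdS psdL]]]]].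
  by do 4!split=> //; move=> k; rewrite -lmiE.
by split=> // k; rewrite lmiE.
Qed.

Lemma w_gen_eq_red (P : gen_pep R n p q) : agents_equiv_gen P -> w_gen P = w_gen_red P.
Proof.
move=> equivP; rewrite /w_gen /w_gen_red; congr ereal_sup.
apply/seteqP; split; apply/image_subP.
- move=> [F G] /= /(gen_feas_sym equivP) [feas_sym <-].
  pose i0 : 'I_n := Ordinal (ltnW n_gt1); pose i1 : 'I_n := Ordinal n_gt1.
  rewrite (symF_cst F i0) (@symG_blk _ _ _ _ i0 i1) // in feas_sym *.
  by exists (symF F i0, symG G i0 i0, symG G i0 i1); rewrite /= ?gen_obj_eval_blk -?gen_feas_blk.
- move=> [[fA GA] GC] /= feas_red.
  by exists (fun=> fA, blkG GA GC); rewrite /= ?gen_obj_eval_blk ?gen_feas_blk.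
Qed.

End GeneralPEP.

Section ScaleInvariantSym.
Variables (R : realType) (lm lp : R) (n p q : nat).
Implicit Types (F : Fvar R n q) (G : Gvar R n p).

Lemma sa_eval_sym (c : sa_lmi R p q) F G i :
  sa_eval c (symF F i) (symG G i i) = avg (fun s => sa_eval c (actF s F i) (actG s G i i)).
Proof.
rewrite /sa_eval !avgD avg_cst !avg_sum; congr (_ + _ + _).
  by apply: eq_bigr => a _; rewrite avg_mxE avgR_scale.
by apply: eq_bigr => a _; rewrite avg_sum; apply: eq_bigr => b _; rewrite avg_mxE avgR_scale.
Qed.

Lemma sum2_symG G a b :
  \sum_i \sum_j symG G i j a b = avgR (fun s => \sum_i \sum_j actG s G i j a b).
Proof.
rewrite avgR_sum; apply: eq_bigr => i _; rewrite avgR_sum.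
by apply: eq_bigr => j _; rewrite avg_mxE.
Qed.

Lemma si_eval_sym (h : si_expr R p q) F G :
  si_eval h (symF F) (symG G) = avgR (fun s => si_eval h (actF s F) (actG s G)).
Proof.
rewrite /si_eval avgRD !avgR_sum; congr (_ + _); apply: eq_bigr => a _.
  rewrite avgRMl /avgF avgRMl avgR_sum; congr (_ * (_ * _)).
  by apply: eq_bigr => i _; rewrite avg_mxE.
rewrite avgR_sum; apply: eq_bigr => b _; rewrite avgRD !avgRMl /gramA /gramM.
rewrite sum2_symG avgR_sum; congr (_ * (_ * _) + _).
by apply: eq_bigr => i _; rewrite avg_mxE.
Qed.

Lemma perp_gram_sym G u v :
  perp_gram (symG G) u v = avgR (fun s => perp_gram (actG s G) u v).
Proof.
rewrite /perp_gram avgRB avgRMl sum2_symG avgR_sum; congr (_ - _).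
by apply: eq_bigr => i _; rewrite avg_mxE.
Qed.

Lemma perp_mx_sym G m (x y : 'I_m -> 'I_p) :
  \matrix_(k, l) perp_gram (symG G) (x k) (y l)
  = avg (fun s => \matrix_(k, l) perp_gram (actG s G) (x k) (y l)).
Proof.
apply/matrixP => k l; rewrite mxE avg_mxE perp_gram_sym.
by congr avgR; apply/funext => s; rewrite mxE.
Qed.

Lemma cons_ok_sym (c : cons_block p) G :
  (forall s, cons_ok lm lp c (actG s G)) -> cons_ok lm lp c (symG G).
Proof.
move=> consG; rewrite /cons_ok !perp_mx_sym; split; last split.
- move=> k.
  under eq_bigr => i _ do under eq_bigr => j _ do rewrite !avg_mxE -!avgRB -avgRD.
  under eq_bigr => i _ do rewrite -avgR_sum.
  by rewrite -avgR_sum; apply: avgR_eq_cst => s; case: (consG s) => /(_ k).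
- rewrite -!avgZ -!avgB -avgD -avgN; apply: psd_avg => s.
  by case: (consG s) => _ [].
- by congr avg; apply/funext => s; case: (consG s) => _ [].
Qed.

Lemma pd_feas_sym (D : pep_desc R p q) F G :
  agents_equiv_pd lm lp n D -> pd_feas lm lp D F G ->
  pd_feas lm lp D (symF F) (symG G) /\
  si_eval (pd_obj D) (symF F) (symG G) = si_eval (pd_obj D) F G.
Proof.
move=> equivD feasFG.
have orbit s := act_invariant_of_swap_invariant equivD s feasFG.
have feas s := proj1 (orbit s).
split; last by rewrite si_eval_sym; apply: avgR_eq_cst => s; case: (orbit s).
split; [|split; [|split; [|split; [|split]]]].
- by apply: psd_blocks_sym => s; case: (feas s).
- by move=> k i; rewrite sa_eval_sym; apply: psd_avg => s; case: (feas s) => _ [].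
- move=> k; rewrite si_eval_sym; apply: avgR_le_cst => s.
  by case: (feas s) => _ [_ []].
- move=> k i j /=; rewrite !avg_mxE -!avgRB -avgRD.
  by apply: avgR_eq_cst => s; case: (feas s) => _ [_ [_ [/(_ k i j)]]].
- move=> k /=; rewrite sum2_symG; apply: avgR_eq_cst => s.
  by case: (feas s) => _ [_ [_ [_ [/(_ k)]]]].
- by move=> k; apply: cons_ok_sym => s; case: (feas s) => _ [_ [_ [_ [_ /(_ k)]]]].
Qed.

End ScaleInvariantSym.

Section ScaleInvariantBlk.
Variables (R : realType) (lm lp : R) (n p q : nat).
Hypothesis n_gt1 : (1 < n)%N.
Local Notation nR := (n%:R : R).

Variables (fA : 'rV[R]_q) (GA GC GM : 'M[R]_p).
Hypothesis GM_def : nR *: GM = GA + (nR - 1) *: GC.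
Local Notation F := (fun _ : 'I_n => fA).
Local Notation G := (@blkG R n p GA GC).

Let nR_gt1 : 1 < nR. Proof. by rewrite ltr1n. Qed.
Let nR_gt0 : 0 < nR. Proof. exact: lt_trans ltr01 nR_gt1. Qed.
Let nR_neq0 : nR != 0. Proof. exact: lt0r_neq0. Qed.
Let nR1_gt0 : 0 < nR - 1. Proof. by rewrite subr_gt0. Qed.

Lemma sum2_blkG_mean (T : 'M[R]_p -> R) : scalar T ->
  \sum_i \sum_j T (G i j) = nR * nR * T GM.
Proof.
move=> linT; have T_scale := scalable_linear linT.
rewrite sum_blkG_cst -mulrA -mulrDr [T GA + _]addrC -linT [_ *: GC + GA]addrC.
by rewrite -GM_def T_scale mulrA.
Qed.

Lemma avgF_blk a : avgF F a = fA 0 a.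
Proof.
by rewrite /avgF sumr_const card_ord -[fA 0 a *+ n]mulr_natl mulrA mulVf ?mul1r.
Qed.

Lemma sum_diag_blkG a b : \sum_i G i i a b = nR * GA a b.
Proof.
rewrite (eq_bigr (fun=> GA a b)) => [|i _]; last by rewrite /blkG eqxx.
by rewrite sumr_const card_ord mulr_natl.
Qed.

Lemma gramA_blk a b : gramA G a b = GA a b.
Proof. by rewrite /gramA sum_diag_blkG mulrA mulVf ?mul1r. Qed.

Lemma gramM_blk a b : gramM G a b = GM a b.
Proof.
rewrite /gramM (sum2_blkG_mean (T := fun M => M a b)) => [|c M N]; last by rewrite !mxE.
by rewrite -expr2 mulrA mulVf ?mul1r ?expf_neq0.
Qed.

Lemma si_eval_blk (h : si_expr R p q) : si_eval h F G = si_red h fA GA GM.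
Proof.
rewrite /si_eval /si_red; congr (_ + _).
  by apply: eq_bigr => a _; rewrite avgF_blk.
by apply: eq_bigr => a _; apply: eq_bigr => b _; rewrite gramA_blk gramM_blk.
Qed.

Lemma perp_gram_blk u v : perp_gram G u v = nR * (GA - GM) u v.
Proof.
rewrite /perp_gram sum_diag_blkG (sum2_blkG_mean (T := fun M => M u v)) => [|c M N].
  by rewrite !mxE mulrBr -[_ * _ * GM u v]mulrA mulKf.
by rewrite !mxE.
Qed.

Lemma perp_mx_blk m (x y : 'I_m -> 'I_p) :
  \matrix_(k, l) perp_gram G (x k) (y l) = nR *: \matrix_(k, l) (GA - GM) (x k) (y l).
Proof. by apply/matrixP => k l; rewrite !mxE perp_gram_blk !mxE. Qed.

Lemma cons_ok_blk (c : cons_block p) : cons_ok lm lp c G <-> cons_red_ok lm lp c GA GM.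
Proof.
rewrite /cons_ok /cons_red_ok !perp_mx_blk.
have scaleE (YY YX XY XX : 'M[R]_(cb_K c)) :
    - (nR *: YY - lp *: (nR *: YX) - lm *: (nR *: XY) + (lm * lp) *: (nR *: XX))
    = nR *: - (YY - lp *: YX - lm *: XY + (lm * lp) *: XX).
  by apply/matrixP => i j; rewrite !mxE; ring.
have meanE (x y : 'I_p) : \sum_i \sum_j (G i j x x - G i j x y - G i j y x + G i j y y)
                          = nR * nR * (GM x x - GM x y - GM y x + GM y y).
  apply: (sum2_blkG_mean (T := fun M => M x x - M x y - M y x + M y y)).
  by move=> a M N; rewrite !mxE; ring.
have nR2_neq0 : nR * nR != 0 by rewrite mulf_neq0.
rewrite scaleE psdZ_gt0 //.
split=> -[mean0 [psdC symC]]; (split; [move=> k | split=> //]).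
- by apply/eqP; rewrite -(mulrI_eq0 _ (lregP nR2_neq0)) -meanE mean0.
- exact: (scalerI nR_neq0).
- by rewrite meanE mean0 mulr0.
- by rewrite symC.
Qed.

Lemma blkG_sum_mean : GA + (n.-1)%:R *: GC = nR *: GM.
Proof. by rewrite predn_natr // GM_def. Qed.

Lemma blkG_diff_mean : (nR - 1) *: (GA - GC) = nR *: (GA - GM).
Proof. by rewrite [RHS]scalerBr GM_def; apply/matrixP => a b; rewrite !mxE; ring. Qed.

Lemma psd_blocks_blkG_mean :
  psd_blocks G <-> GA^T = GA /\ GM^T = GM /\ psd GM /\ psd (GA - GM).
Proof.
have sumE := blkG_sum_mean; have diffE := blkG_diff_mean.
have trE : nR *: GM^T = GA^T + (nR - 1) *: GC^T by rewrite -!linearZ /= GM_def linearD.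
rewrite psd_blocks_blkG //.
split=> [[symA symC psdD psdS] | [symA [symM [psdM psdD]]]].
- split=> //; split; first by apply: (scalerI nR_neq0); rewrite trE symA symC.
  split; apply/(psdZ_gt0 _ nR_gt0); first by rewrite -sumE.
  by rewrite -diffE; apply/psdZ_gt0.
- split=> //.
  + apply: (scalerI (lt0r_neq0 nR1_gt0)); apply: (addrI GA).
    by rewrite -{1}symA -trE symM GM_def.
  + by apply/(psdZ_gt0 _ nR1_gt0); rewrite diffE; apply/psdZ_gt0.
  + by rewrite sumE; apply/psdZ_gt0.
Qed.

Lemma common_point_blk a :
  (forall i j : 'I_n, G i i a a - G i j a a - G j i a a + G j j a a = 0) <->
  GA a a - GM a a = 0.
Proof.
have diffE : (nR - 1) * (GA a a - GC a a) = nR * (GA a a - GM a a).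
  by have := congr1 (fun M : 'M_p => M a a) blkG_diff_mean; rewrite !mxE.
have -> : (GA a a - GM a a = 0) <-> (GA a a - GC a a = 0).
  split=> eq0; apply/eqP.
    by rewrite -(mulrI_eq0 _ (lregP (lt0r_neq0 nR1_gt0))) diffE eq0 mulr0.
  by rewrite -(mulrI_eq0 _ (lregP nR_neq0)) -diffE eq0 mulr0.
split=> [/(_ (Ordinal (ltnW n_gt1)) (Ordinal n_gt1)) | eq0 i j]; rewrite /blkG ?eqxx /=.
  by lra.
by rewrite [j == i]eq_sym; case: (i == j); lra.
Qed.

Lemma optimality_blk a : \sum_i \sum_j G i j a a = 0 <-> GM a a = 0.
Proof.
rewrite (sum2_blkG_mean (T := fun M => M a a)) => [|c M N]; last by rewrite !mxE.
split=> [|->]; last by rewrite mulr0.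
by move/eqP; rewrite -mulrA !(mulrI_eq0 _ (lregP nR_neq0)) => /eqP.
Qed.

Lemma pd_feas_blk (D : pep_desc R p q) :
  pd_feas lm lp D F G <-> pd_red_feas lm lp D fA GA GM.
Proof.
rewrite /pd_feas /pd_red_feas psd_blocks_blkG_mean.
split=> [[[symA [symM [psdM psdD]]] [saP [siP [comP [optP consP]]]]] |
         [symA [symM [psdM [psdD [saP [siP [comP [optP consP]]]]]]]]].
- do 4!split=> //; split; last split; last split; last split.
  + by move=> k; have := saP k (Ordinal (ltnW n_gt1)); rewrite /blkG eqxx.
  + by move=> k; rewrite -si_eval_blk.
  + by move=> k /=; apply/common_point_blk.
  + by move=> k /=; apply/optimality_blk.
  + by move=> k; apply/cons_ok_blk.
- split=> //; split; last split; last split; last split.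
  + by move=> k i; rewrite /blkG eqxx.
  + by move=> k; rewrite si_eval_blk.
  + by move=> k /=; apply/common_point_blk.
  + by move=> k /=; apply/optimality_blk.
  + by move=> k; apply/cons_ok_blk.
Qed.

End ScaleInvariantBlk.

Lemma w_pd_eq_red (R : realType) (lm lp : R) (p q : nat) (D : pep_desc R p q) (n : nat) :
  (1 < n)%N -> agents_equiv_pd lm lp n D -> w_pd lm lp n D = w_pd_red lm lp D.
Proof.
move=> n_gt1 equivD; rewrite /w_pd /w_pd_red; congr ereal_sup.
have nR_gt1 : 1 < (n%:R : R) by rewrite ltr1n.
apply/seteqP; split; apply/image_subP.
- move=> [F G] /= /(pd_feas_sym equivD) [feas_sym <-].
  pose i0 : 'I_n := Ordinal (ltnW n_gt1); pose i1 : 'I_n := Ordinal n_gt1.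
  rewrite (symF_cst F i0) (@symG_blk _ _ _ _ i0 i1) // in feas_sym *.
  have [GM GM_def] : exists GM, n%:R *: GM = symG G i0 i0 + (n%:R - 1) *: symG G i0 i1.
    exists ((n%:R : R)^-1 *: (symG G i0 i0 + (n%:R - 1) *: symG G i0 i1)).
    by rewrite scalerA mulfV ?scale1r // lt0r_neq0 // (lt_trans ltr01).
  exists (symF F i0, symG G i0 i0, GM).
    by apply/(pd_feas_blk _ _ n_gt1 _ GM_def).
  by rewrite (si_eval_blk n_gt1 _ GM_def).
- move=> [[fA GA] GM] /= feas_red.
  have [GC GM_def] : exists GC, n%:R *: GM = GA + (n%:R - 1) *: GC.
    exists (((n%:R : R) - 1)^-1 *: (n%:R *: GM - GA)).
    rewrite scalerA mulfV ?scale1r; first by rewrite addrC subrK.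
    by rewrite subr_eq0 gt_eqF.
  exists (fun=> fA, blkG GA GC).
    by apply/(pd_feas_blk _ _ n_gt1 _ GM_def).
  by rewrite (si_eval_blk n_gt1 _ GM_def).
Qed.

Theorem theorem3 (R : realType) (lm lp : R) :
  -1 < lm -> lm <= lp -> lp < 1 ->
  (* 1. the PEP value equals that of the SDP in (fA, GA, GC) *)
  (forall (n p q : nat) (P : gen_pep R n p q),
      (2 <= n)%N -> agents_equiv_gen P ->
      w_gen P = w_gen_red P)
  /\
  (* 2. scale-invariant objective, single-agent / scale-invariant initial
        conditions: the SDP (and hence w(S_n)) does not depend on n *)
  (forall (p q : nat) (D : pep_desc R p q) (n : nat),
      (2 <= n)%N -> agents_equiv_pd lm lp n D ->
      w_pd lm lp n D = w_pd_red lm lp D).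
Proof.
(* The reduction is valid for arbitrary spectral bounds lm, lp. *)
move=> _ _ _; split=> [n p q P n_gt1 | p q D n n_gt1].
  exact: w_gen_eq_red.
exact: w_pd_eq_red.
Qed.
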